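(* Consider the $(\mu+1)$ EA with clearing (any population size $\mu$, clearing radius, niche capacity and distance function) on any fitness function on $\{0,1\}^n$. The probability that, starting from a search point $x^*$, within $\mu n/16$ generations the algorithm evolves a lineage that reaches Hamming distance at least $n/2$ to its founder $x^*$ is $2^{-\Omega(n)}$.
   Context: A lineage starting from $x^*$ is a sequence $x^*=z_0,z_1,\dots,z_k$ of individuals where each $z_{i+1}$ is created as the offspring of parent $z_i$ in some generation; it reaches Hamming distance at least $n/2$ if some $z_i$ has Hamming distance at least $n/2$ to $x^*$. The $(\mu+1)$ EA with clearing (population size $\mu$, clearing radius $\sigma$, niche capacity $\kappa$, distance function $\mathrm{d}$), for a fitness function with positive values: in generation $t$, choose a parent $x\in P_t$ uniformly at random; create $y$ by flipping each bit of $x$ independently with probability $1/n$; let $P_t^*=P_t\cup\{y\}$; update the fitness values of $P_t^*$ by the clearing procedure: sort $P_t^*$ by decreasing fitness; for $i=1,\dots,|P_t^*|$, if the current fitness of $P[i]$ is positive, set $w:=1$ and for $j=i+1,\dots,|P_t^*|$: if the current fitness of $P[j]$ is positive and $\mathrm{d}(P[i],P[j])<\sigma$ then, if $w<\kappa$ set $w:=w+1$, else set the fitness of $P[j]$ to $0$. Then choose $z\in P_t$ with worst (cleared) fitness uniformly at random; if the (cleared) fitness of $y$ is at least that of $z$, set $P_{t+1}=P_t^*\setminus\{z\}$, otherwise $P_{t+1}=P_t^*\setminus\{y\}$. *)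

From HB Require Import structures.
From mathcomp Require Import all_boot all_order all_algebra.
From mathcomp Require Import reals exp.
Set Implicit Arguments. Unset Strict Implicit. Unset Printing Implicit Defensive.
Import Order.TTheory GRing.Theory Num.Theory.
Local Open Scope ring_scope.

Section MuPlusOneClearing.
Variables (R : realType) (n mu : nat).

Definition bits := n.-tuple bool.

Definition ham (x y : bits) : nat := (\sum_(i < n) (tnth x i != tnth y i))%N.

Definition mutprob (x y : bits) : R :=
  (n%:R^-1) ^+ ham x y * (1 - n%:R^-1) ^+ (n - ham x y).

(* An individual is a search point together with a flag recording whether
   it belongs to a lineage starting from the founder individual. *)
Definition indiv := (bits * bool)%type.
Definition pop := mu.-tuple indiv.

(* Extended population P_t^* = P_t ∪ {y}; index ord_max is the offspring y. *)
Definition extpop (P : pop) (y : indiv) : mu.+1.-tuple indiv :=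
  [tuple if (k < mu)%N then nth y P k else y | k < mu.+1].

Variables (f : bits -> R) (d : bits -> bits -> R) (sigma : R) (kappa : nat).

Definition idx := 'I_mu.+1.
Definition upd (cur : idx -> R) (j : idx) : idx -> R :=
  fun k => if k == j then 0 else cur k.

Fixpoint clear_inner (g : idx -> bits) (i : idx) (rest : seq idx) (w : nat)
  (cur : idx -> R) : idx -> R :=
  match rest with
  | [::] => cur
  | j :: r =>
      if (0 < cur j) && (d (g i) (g j) < sigma) then
        if (w < kappa)%N then clear_inner g i r w.+1 cur
        else clear_inner g i r w (upd cur j)
      else clear_inner g i r w cur
  end.

Fixpoint clear_outer (g : idx -> bits) (s : seq idx) (cur : idx -> R)
  : idx -> R :=
  match s with
  | [::] => cur
  | i :: r =>
      clear_outer g r (if 0 < cur i then clear_inner g i r 1 cur else cur)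
  end.

Definition cleared (Q : mu.+1.-tuple bits) (s : seq idx) : idx -> R :=
  clear_outer (fun k => tnth Q k) s (fun k => f (tnth Q k)).

Definition valid_sort (tb : mu.+1.-tuple bits -> seq idx) : Prop :=
  forall Q, perm_eq (tb Q) (enum 'I_mu.+1) /\
            sorted (fun i j => f (tnth Q j) <= f (tnth Q i)) (tb Q).

Variable tb : mu.+1.-tuple bits -> seq idx.

Definition cfit (Ps : mu.+1.-tuple indiv) : idx -> R :=
  let Q := [tuple (tnth Ps k).1 | k < mu.+1] in cleared Q (tb Q).

Definition worst (Ps : mu.+1.-tuple indiv) : {set 'I_mu} :=
  [set z : 'I_mu | [forall z' : 'I_mu,
     cfit Ps (widen_ord (leqnSn mu) z) <= cfit Ps (widen_ord (leqnSn mu) z')]].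

Definition next_pop (P : pop) (y : indiv) (z : 'I_mu) : pop :=
  let Ps := extpop P y in
  if cfit Ps (widen_ord (leqnSn mu) z) <= cfit Ps ord_max then
    [tuple if k == z then y else tnth P k | k < mu]
  else P.

Variable xs : bits.

Definition far (x : bits) : bool := (n <= 2 * ham x xs)%N.

(* An offspring counts as soon as it is created, even if it is discarded. *)
Fixpoint reach (T : nat) (P : pop) : R :=
  if [exists k : 'I_mu, (tnth P k).2 && far (tnth P k).1] then 1 else
  match T with
  | 0 => 0
  | T'.+1 =>
      \sum_(i < mu) mu%:R^-1 *
        \sum_(y : bits) mutprob (tnth P i).1 y *
          (if (tnth P i).2 && far y then 1 else
           let yi := (y, (tnth P i).2) in
           let W := worst (extpop P yi) in
           \sum_(z in W) #|W|%:R^-1 * reach T' (next_pop P yi z))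
  end.

End MuPlusOneClearing.

Definition init_pop (n mu : nat) (P0 : mu.-tuple (bits n)) (i0 : 'I_mu)
  : pop n mu := [tuple (tnth P0 k, k == i0) | k < mu].

From HB Require Import structures.
From mathcomp Require Import all_boot all_order all_algebra.
From mathcomp Require Import reals sequences exp.
From mathcomp Require Import zify ring lra.
Set Implicit Arguments. Unset Strict Implicit. Unset Printing Implicit Defensive.
Import Order.TTheory GRing.Theory Num.Theory.
Local Open Scope ring_scope.

(* Weigh a lineage member x by 2^H(x, x^* ) and call the total weight of the
   lineage members of a population its potential.  Mutating x multiplies the
   expected weight by at most E[2^H(x, y)] = (1 + 1/n)^n <= e, and a generation
   mutates a uniformly random parent and replaces at most one individual, so
   whatever the clearing and replacement do, the expected potential grows by a
   factor at most 1 + e/mu per generation.  A lineage member at distance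
   >= n/2 weighs >= 2^(n/2), hence (a Markov-type bound, by induction on the
   number of generations) the probability of creating one within mu n/16
   generations is at most
   (1 + e/mu)^(mu n/16) 2^(-n/2) <= e^(3n/16) 2^(-n/2) <= 2^(-n/16). *)

Lemma sum_tuple_prod {R : comNzRingType} {T : finType} {n} (F : 'I_n -> T -> R) :
  \sum_(t : n.-tuple T) \prod_(i < n) F i (tnth t i)
  = \prod_(i < n) \sum_(a : T) F i a.
Proof.
rewrite bigA_distr_bigA /=.
rewrite (reindex (fun g : {ffun 'I_n -> T} => [tuple g i | i < n])) /=.
  by apply: eq_bigr => g _; apply: eq_bigr => i _; rewrite tnth_mktuple.
exists (fun t : n.-tuple T => [ffun i => tnth t i]) => [g _|t _].
  by apply/ffunP => i; rewrite ffunE tnth_mktuple.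
by apply: eq_from_tnth => i; rewrite tnth_mktuple ffunE.
Qed.

Lemma prodr_if_sum (R : comNzRingType) n (c : 'I_n -> bool) (A B : R) :
  \prod_(i < n) (if c i then A else B)
  = A ^+ (\sum_(i < n) c i) * B ^+ (n - \sum_(i < n) c i).
Proof.
have sum_c : (\sum_(i < n) c i = #|c|)%N.
  rewrite -sum1_card [RHS]big_mkcond; apply: eq_bigr => i _.
  by rewrite unfold_in; case: (c i).
rewrite sum_c (bigID c) /= -[X in (X - _)%N](card_ord n) -(cardC c) addKn.
rewrite (eq_bigr (fun=> A)) => [|i -> //].
rewrite [X in _ * X](eq_bigr (fun=> B)) => [|i /negbTE -> //].
by rewrite !prodr_const.
Qed.

Lemma mean_le (R : numFieldType) (I : finType) (W : {set I}) (g : I -> R) B :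
  0 <= B -> (forall i, g i <= B) -> \sum_(i in W) #|W|%:R^-1 * g i <= B.
Proof.
move=> B_ge0 gB.
apply: (@le_trans _ _ (\sum_(i in W) #|W|%:R^-1 * B)).
  by apply: ler_sum => i _; rewrite ler_wpM2l ?invr_ge0.
rewrite sumr_const; have [->|W_gt0] := posnP #|W|; first by rewrite mulr0n.
by rewrite -[_ *+ #|W|]mulr_natr mulrAC mulVf ?mul1r // pnatr_eq0 -lt0n.
Qed.

Section Mutation.
Variables (R : realType) (n : nat).

Lemma ham_triangle (x y z : bits n) : (ham y z <= ham x z + ham x y)%N.
Proof.
rewrite /ham -big_split /=; apply: leq_sum => i _.
by case: (tnth x i); case: (tnth y i); case: (tnth z i).
Qed.

Lemma inv_natr_le1 : n%:R^-1 <= 1 :> R.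
Proof. by case: n => [|m]; rewrite ?invr0 // invf_le1 // ?ler1n // ltr0Sn. Qed.

Lemma mutprob_ge0 (x y : bits n) : 0 <= mutprob R x y.
Proof.
by rewrite /mutprob mulr_ge0 // exprn_ge0 // ?invr_ge0 // subr_ge0 inv_natr_le1.
Qed.

Lemma sum_mutprob_exp_ham (x : bits n) (b : R) :
  \sum_(y : bits n) mutprob R x y * b ^+ ham x y
  = (1 - n%:R^-1 + n%:R^-1 * b) ^+ n.
Proof.
pose p : R := n%:R^-1.
pose F i (a : bool) := if tnth x i != a then p * b else 1 - p.
have mutE y : mutprob R x y * b ^+ ham x y = \prod_(i < n) F i (tnth y i).
  by rewrite prodr_if_sum /mutprob /ham exprMn -!mulrA [X in _ * X]mulrC.
rewrite (eq_bigr _ (fun y _ => mutE y)) (sum_tuple_prod F).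
rewrite -[RHS]/((1 - p + p * b) ^+ n) -[in RHS](card_ord n) -prodr_const.
by apply: eq_bigr => i _; rewrite big_bool /F; case: (tnth x i); rewrite /= addrC.
Qed.

Lemma sum_mutprob (x : bits n) : \sum_(y : bits n) mutprob R x y = 1.
Proof.
have := sum_mutprob_exp_ham x 1; rewrite mulr1 subrK expr1n => <-.
by apply: eq_bigr => y _; rewrite expr1n mulr1.
Qed.

End Mutation.

Section Potential.
Variables (R : realType) (n mu : nat) (f : bits n -> R)
  (d : bits n -> bits n -> R) (sigma : R) (kappa : nat)
  (tb : mu.+1.-tuple (bits n) -> seq 'I_mu.+1) (xs : bits n).

Definition lineage_weight (a : indiv n) : R := if a.2 then 2 ^+ ham a.1 xs else 0.

Definition potential (P : pop n mu) : R := \sum_(k < mu) lineage_weight (tnth P k).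

Definition mutation_growth : R := (1 + n%:R^-1) ^+ n.

Definition generation_growth : R := 1 + mutation_growth / mu%:R.

Definition far_scale : R := (2 ^+ n./2)^-1.

Lemma lineage_weight_ge0 a : 0 <= lineage_weight a.
Proof. by rewrite /lineage_weight; case: ifP => // _; rewrite exprn_ge0. Qed.

Lemma potential_ge0 P : 0 <= potential P.
Proof. by apply: sumr_ge0 => k _; apply: lineage_weight_ge0. Qed.

Lemma generation_growth_ge1 : 1 <= generation_growth.
Proof.
by rewrite /generation_growth lerDl divr_ge0 // exprn_ge0 // addr_ge0 ?invr_ge0.
Qed.

Lemma far_scale_ge0 : 0 <= far_scale.
Proof. by rewrite /far_scale invr_ge0 exprn_ge0. Qed.

Lemma far_weight_ge1 (x : bits n) : far xs x -> 1 <= 2 ^+ ham x xs * far_scale.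
Proof.
rewrite /far /far_scale => x_far.
have half_le : (n./2 <= ham x xs)%N by lia.
rewrite -(subnK half_le) exprD -mulrA mulfV ?mulr1 ?exprn_ege1 ?ler1n //.
by rewrite expf_neq0 // pnatr_eq0.
Qed.

Lemma far_bound_ge1 (x : bits n) (Phi : R) T :
  far xs x -> 2 ^+ ham x xs <= Phi ->
  1 <= Phi * generation_growth ^+ T * far_scale.
Proof.
move=> x_far weight_le.
have Phi_ge0 : 0 <= Phi := le_trans (exprn_ge0 _ (ler0n _ 2)) weight_le.
apply: le_trans (far_weight_ge1 x_far) _.
rewrite ler_wpM2r ?far_scale_ge0 //; apply: le_trans weight_le _.
by rewrite ler_peMr ?exprn_ege1 ?generation_growth_ge1.
Qed.

Lemma lineage_far_bound_ge1 P T :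
  [exists k : 'I_mu, (tnth P k).2 && far xs (tnth P k).1] ->
  1 <= potential P * generation_growth ^+ T * far_scale.
Proof.
case/existsP => k /andP [k_lineage k_far]; apply: far_bound_ge1 k_far _.
rewrite /potential (bigD1 k) //= {1}/lineage_weight k_lineage lerDl.
by apply: sumr_ge0 => j _; apply: lineage_weight_ge0.
Qed.

Lemma potential_next_pop P y z :
  potential (next_pop f d sigma kappa tb P y z) <= potential P + lineage_weight y.
Proof.
rewrite /next_pop; case: ifP => _; last by rewrite lerDl lineage_weight_ge0.
rewrite /potential (bigD1 z) //= [X in _ <= X + _](bigD1 z) //= tnth_mktuple eqxx.
rewrite (eq_bigr (fun i => lineage_weight (tnth P i))) => [|i /negbTE z_neq].
  by rewrite addrC lerD2r lerDr lineage_weight_ge0.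
by rewrite tnth_mktuple z_neq.
Qed.

Lemma sum_mutprob_lineage_weight (a : indiv n) :
  \sum_(y : bits n) mutprob R a.1 y * lineage_weight (y, a.2)
  <= lineage_weight a * mutation_growth.
Proof.
case: a => x [] /=; last by rewrite mul0r big1 // => y _; rewrite mulr0.
apply: (@le_trans _ _
    (\sum_(y : bits n) 2 ^+ ham x xs * (mutprob R x y * 2 ^+ ham x y))).
  apply: ler_sum => y _; rewrite mulrCA ler_wpM2l ?mutprob_ge0 //.
  by rewrite -exprD ler_eXn2l ?ltr1n // ham_triangle.
rewrite -mulr_sumr sum_mutprob_exp_ham ler_wpM2l ?exprn_ge0 // /mutation_growth.
by have -> : 1 - n%:R^-1 + n%:R^-1 * 2 = 1 + n%:R^-1 :> R by ring.
Qed.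

Lemma expected_offspring_potential (a : indiv n) (Phi : R) :
  \sum_(y : bits n) mutprob R a.1 y * (Phi + lineage_weight (y, a.2))
  <= Phi + lineage_weight a * mutation_growth.
Proof.
under eq_bigr do rewrite mulrDr.
by rewrite big_split /= -mulr_suml sum_mutprob mul1r lerD2l sum_mutprob_lineage_weight.
Qed.

Lemma reach_le_potential T P : (0 < mu)%N ->
  reach f d sigma kappa tb xs T P <= potential P * generation_growth ^+ T * far_scale.
Proof.
move=> mu_gt0; elim: T P => [|T IH] P /=; case: ifP => [|_];
  try exact: lineage_far_bound_ge1.
  by rewrite expr0 mulr1 mulr_ge0 ?potential_ge0 ?far_scale_ge0.
set B := generation_growth ^+ T * far_scale.
have B_ge0 : 0 <= B.
  by rewrite mulr_ge0 ?far_scale_ge0 ?exprn_ge0 // (le_trans ler01 generation_growth_ge1).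
apply: (@le_trans _ _ (\sum_(i < mu) mu%:R^-1 *
    ((potential P + lineage_weight (tnth P i) * mutation_growth) * B))).
  apply: ler_sum => i _; rewrite ler_wpM2l ?invr_ge0 //.
  apply: (@le_trans _ _ (\sum_(y : bits n) mutprob R (tnth P i).1 y *
      ((potential P + lineage_weight (y, (tnth P i).2)) * B))).
    apply: ler_sum => y _; rewrite ler_wpM2l ?mutprob_ge0 //.
    case: ifP => [/andP [lineage y_far]|_].
      rewrite mulrA; apply: far_bound_ge1 y_far _.
      by rewrite /lineage_weight /= lineage lerDr potential_ge0.
    apply: mean_le => [|z].
      by rewrite mulr_ge0 ?addr_ge0 ?potential_ge0 ?lineage_weight_ge0.
    by apply: le_trans (IH _) _; rewrite -mulrA ler_wpM2r ?potential_next_pop.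
  under eq_bigr do rewrite mulrA.
  by rewrite -big_distrl ler_wpM2r // expected_offspring_potential.
rewrite -mulr_sumr -big_distrl big_split /= sumr_const card_ord -big_distrl /=.
rewrite -/(potential P) /generation_growth exprS -[potential P *+ mu]mulr_natr.
have mu_neq0 : mu%:R != 0 :> R by rewrite pnatr_eq0 -lt0n.
by rewrite /B le_eqVlt; apply/orP; left; apply/eqP; field.
Qed.

End Potential.

Lemma expR_mul1B_le1 {R : realType} (x : R) : expR x * (1 - x) <= 1.
Proof.
by rewrite -[leRHS](expRxMexpNx_1 x) ler_wpM2l ?expR_ge0 ?expR_ge1Dx.
Qed.

Lemma expR1_le3 (R : realType) : expR (1 : R) <= 3.
Proof.
have e6_le : expR (6^-1 : R) <= 6 / 5.
  have := expR_mul1B_le1 (6^-1 : R); have := expR_gt0 (6^-1 : R).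
  by set e := expR _; lra.
have -> : expR (1 : R) = expR (6^-1) ^+ 6 by rewrite -expRM_natr mulVf ?pnatr_eq0.
apply: le_trans (lerXn2r 6 _ _ e6_le) _; rewrite ?nnegrE ?expR_ge0 //; first lra.
by rewrite !exprS expr0; lra.
Qed.

Lemma mutation_growth_le3 (R : realType) n : mutation_growth R n <= 3.
Proof.
rewrite /mutation_growth; apply: le_trans (expR1_le3 R).
case: n => [|m]; first by rewrite expr0 ltW // expR_gt1.
have -> : expR (1 : R) = expR (m.+1%:R^-1) ^+ m.+1.
  by rewrite -expRM_natr mulVf ?pnatr_eq0.
by rewrite lerXn2r ?nnegrE ?addr_ge0 ?invr_ge0 ?expR_ge0 // expR_ge1Dx.
Qed.

Lemma generation_growth_expn_le (R : realType) n mu : (0 < mu)%N ->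
  generation_growth R n mu ^+ mu <= 2 ^+ 5.
Proof.
move=> mu_gt0; set K := mutation_growth R n.
apply: (@le_trans _ _ (expR 1 ^+ 3)).
  rewrite -expRM_natr mul1r; apply: (@le_trans _ _ (expR K)).
    rewrite -[K in expR K](@mulfVK _ mu%:R) ?pnatr_eq0 -?lt0n // expRM_natr.
    rewrite lerXn2r ?nnegrE ?expR_ge0 ?expR_ge1Dx //.
    exact: le_trans ler01 (generation_growth_ge1 _ _ _).
  by rewrite ler_expR mutation_growth_le3.
apply: le_trans (lerXn2r 3 _ _ (expR1_le3 R)) _; rewrite ?nnegrE ?expR_ge0 //.
by rewrite !exprS expr0; lra.
Qed.

Lemma growth_far_scale_le (R : realType) n mu T :
  (0 < mu)%N -> (4 <= n)%N -> (T * 16 <= mu * n)%N ->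
  generation_growth R n mu ^+ T * far_scale R n <= 2 `^ (- (1 / 16 * n%:R)).
Proof.
move=> mu_gt0 n_ge4 T_le; set c := generation_growth R n mu.
have c_ge1 : 1 <= c := generation_growth_ge1 R n mu.
have c_ge0 : 0 <= c := le_trans ler01 c_ge1.
have rhs16 : 2 `^ (- (1 / 16 * n%:R)) ^+ 16 = (2 ^+ n)^-1 :> R.
  rewrite -powR_mulrn ?powR_ge0 // -powRrM.
  by rewrite (_ : _ * 16%:R = - n%:R) ?powR_invn //; field.
rewrite -(ler_pXn2r (n := 16)) ?nnegrE ?powR_ge0 ?mulr_ge0 ?exprn_ge0 ?far_scale_ge0 //.
rewrite rhs16 exprMn -exprM /far_scale exprVn -exprM ler_pdivrMr ?exprn_gt0 //.
have c_pow : c ^+ (T * 16) <= 2 ^+ (5 * n).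
  apply: le_trans (ler_weXn2l c_ge1 T_le) _.
  by rewrite !exprM lerXn2r ?nnegrE ?exprn_ge0 ?generation_growth_expn_le.
rewrite mulrC -expfB; last by lia.
by apply: le_trans c_pow _; rewrite ler_weXn2l ?ler1n //; lia.
Qed.

Lemma potential_init (R : realType) n mu (P0 : mu.-tuple (bits n)) (i0 : 'I_mu) :
  potential R (tnth P0 i0) (init_pop P0 i0) = 1.
Proof.
rewrite /potential (bigD1 i0) //= big1 => [|k /negbTE k_neq]; last first.
  by rewrite /lineage_weight tnth_mktuple /= k_neq.
rewrite addr0 /lineage_weight tnth_mktuple /= eqxx.
by rewrite (_ : ham _ _ = 0%N) // /ham big1 // => i _; rewrite eqxx.
Qed.

Theorem corollary3 (R : realType) :
  exists (c : R) (n0 : nat), 0 < c /\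
  forall (n mu : nat) (f : bits n -> R) (d : bits n -> bits n -> R)
         (sigma : R) (kappa : nat) (tb : mu.+1.-tuple (bits n) -> seq 'I_mu.+1)
         (P0 : mu.-tuple (bits n)) (i0 : 'I_mu),
    (n0 <= n)%N ->
    (forall x, 0 < f x) ->
    valid_sort f tb ->
    reach f d sigma kappa tb (tnth P0 i0) ((mu * n) %/ 16) (init_pop P0 i0)
      <= 2 `^ (- (c * n%:R)).
Proof.
exists (1 / 16), 4%N; split; first by lra.
(* The potential bound holds for every fitness, distance and sort order. *)
move=> n mu f d sigma kappa tb P0 i0 n_ge4 _ _.
have mu_gt0 : (0 < mu)%N := leq_ltn_trans (leq0n _) (ltn_ord i0).
have := reach_le_potential f d sigma kappa tb (tnth P0 i0) ((mu * n) %/ 16)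
  (init_pop P0 i0) mu_gt0.
rewrite potential_init mul1r => /le_trans; apply.
by rewrite growth_far_scale_le // leq_divM.
Qed.
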